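(* Let $\mathcal C,\mathcal D$ be braided monoidal categories and $F:\mathcal D\to\mathcal C$ a braided monoidal functor. Let $\mathcal A$ be a $\mathcal C$-monoidal category, $\mathcal B$ a $\mathcal C$-category and $\omega:\mathcal B\to\mathcal A$ a $\mathcal C$-functor, and assume $\mathrm{coend}_{\mathcal C}(\omega)$ and $\mathrm{coend}_{\mathcal D}(\omega)$ exist. Then there is an induced epimorphism of coalgebras $\mathrm{coend}_F(\omega):\mathrm{coend}_{\mathcal D}(\omega)\to\mathrm{coend}_{\mathcal C}(\omega)$ in $\mathcal A$. If in addition the comodule $(\mathrm{coend}_{\mathcal C}(\omega),\Delta)$ is liftable along $\omega$, then $\mathrm{coend}_F(\omega)$ is a retraction in $\mathcal A$.
   Context: A $\mathcal K$-category ($\mathcal K$ monoidal) is a category $\mathcal B$ with a bifunctor $\otimes:\mathcal K\times\mathcal B\to\mathcal B$ and coherent natural isomorphisms $(X\otimes Y)\otimes P\cong X\otimes(Y\otimes P)$, $I\otimes P\cong P$; a $\mathcal K$-functor is a functor with a coherent natural isomorphism $\xi:\omega(X\otimes P)\to X\otimes\omega(P)$; a natural transformation $\varphi:\omega\to\omega'$ of $\mathcal K$-functors is a $\mathcal K$-morphism if $\xi'\varphi(X\otimes P)=(1_X\otimes\varphi(P))\xi$. $\mathcal A$ being $\mathcal C$-monoidal means $\mathcal A$ is a monoidal category and a $\mathcal C$-category whose tensor product is compatible with the $\mathcal C$-action via coherent isomorphisms, so that in particular $\omega\otimes M:P\mapsto\omega(P)\otimes M$ ($M\in\mathcal A$)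 is a $\mathcal C$-functor. Via $F$, every $\mathcal C$-category becomes a $\mathcal D$-category ($X\otimes P:=F(X)\otimes P$), every $\mathcal C$-functor a $\mathcal D$-functor with the same $\xi$, and every $\mathcal C$-morphism is a $\mathcal D$-morphism. For $\mathcal K\in\{\mathcal C,\mathcal D\}$, $\mathrm{coend}_{\mathcal K}(\omega)$ is an object of $\mathcal A$ representing $M\mapsto\mathrm{Nat}_{\mathcal K}(\omega,\omega\otimes M)$ ($\mathcal K$-morphisms), with universal morphism $\delta$ and coalgebra structure given by $(1\otimes\Delta)\delta=(\delta\otimes1)\delta$, $(1\otimes\varepsilon)\delta=$ canonical iso; each $\omega(P)$ is a comodule via $\delta$. $\mathrm{coend}_F(\omega)$ is the unique morphism $f$ with $(1_\omega\otimes f)\circ\partial=\delta$, where $\partial$ is the universal $\mathcal D$-morphism and $\delta$ the universal $\mathcal C$-morphism. A comodule $(P,\vartheta)$ is liftable along $\omega$ if there is $Q\in\mathcal B$ and a comodule isomorphism $(\omega(Q),\delta_Q)\cong(P,\vartheta)$. *)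

Set Implicit Arguments.
Unset Strict Implicit.

Record Cat := {
  ob :> Type;
  hom : ob -> ob -> Type;
  idm : forall a, hom a a;
  comp : forall a b c, hom b c -> hom a b -> hom a c;
  comp_idl : forall a b (f : hom a b), comp (idm b) f = f;
  comp_idr : forall a b (f : hom a b), comp f (idm a) = f;
  comp_assoc : forall a b c d (f : hom c d) (g : hom b c) (h : hom a b),
      comp f (comp g h) = comp (comp f g) h }.
Arguments hom {c0} _ _.
Arguments idm {c0} a.
Arguments comp {c0 a b c} _ _.

Notation "g ∘ f" := (comp g f) (at level 40, left associativity).

Definition is_iso (C : Cat) (a b : C) (f : hom a b) : Prop :=
  exists g : hom b a, g ∘ f = idm a /\ f ∘ g = idm b.

Definition is_epi (C : Cat) (a b : C) (f : hom a b) : Prop :=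
  forall (c : C) (g h : hom b c), g ∘ f = h ∘ f -> g = h.

Definition is_retraction (C : Cat) (a b : C) (f : hom a b) : Prop :=
  exists s : hom b a, f ∘ s = idm b.

Record Functor (A B : Cat) := {
  fob :> ob A -> ob B;
  fhom : forall a b, @hom A a b -> hom (fob a) (fob b);
  fhom_id : forall a, fhom (idm a) = idm (fob a);
  fhom_comp : forall a b c (g : @hom A b c) (f : @hom A a b),
      fhom (g ∘ f) = fhom g ∘ fhom f }.
Arguments fhom {A B} f0 {a b} _.

Record Action (K B : Cat) := {
  act :> ob K -> ob B -> ob B;
  acth : forall X X' P P', @hom K X X' -> @hom B P P' -> hom (act X P) (act X' P');
  acth_id : forall X P, acth (idm X) (idm P) = idm (act X P);
  acth_comp : forall X X' X'' P P' P'' (f : @hom K X' X'') (f' : hom X X')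
      (g : @hom B P' P'') (g' : hom P P'),
      acth (f ∘ f') (g ∘ g') = acth f g ∘ acth f' g' }.
Arguments acth {K B} a {X X' P P'} _ _.

Record MonCat := {
  mcat :> Cat;
  tens : Action mcat mcat;
  unit_ob : ob mcat;
  assoc : forall X Y Z, hom (tens (tens X Y) Z) (tens X (tens Y Z));
  assoc_inv : forall X Y Z, hom (tens X (tens Y Z)) (tens (tens X Y) Z);
  assoc_invl : forall X Y Z, assoc_inv X Y Z ∘ assoc X Y Z = idm _;
  assoc_invr : forall X Y Z, assoc X Y Z ∘ assoc_inv X Y Z = idm _;
  assoc_nat : forall X X' Y Y' Z Z' (f : hom X X') (g : hom Y Y') (h : hom Z Z'),
      assoc X' Y' Z' ∘ acth tens (acth tens f g) h
      = acth tens f (acth tens g h) ∘ assoc X Y Z;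
  lunit : forall X, hom (tens unit_ob X) X;
  lunit_iso : forall X, is_iso (lunit X);
  lunit_nat : forall X X' (f : hom X X'),
      lunit X' ∘ acth tens (idm unit_ob) f = f ∘ lunit X;
  runit : forall X, hom (tens X unit_ob) X;
  runit_iso : forall X, is_iso (runit X);
  runit_nat : forall X X' (f : hom X X'),
      runit X' ∘ acth tens f (idm unit_ob) = f ∘ runit X;
  pentagon : forall X Y Z W,
      assoc X Y (tens Z W) ∘ assoc (tens X Y) Z W
      = acth tens (idm X) (assoc Y Z W) ∘ assoc X (tens Y Z) W
        ∘ acth tens (assoc X Y Z) (idm W);
  triangle : forall X Y,
      acth tens (idm X) (lunit Y) ∘ assoc X unit_ob Y
      = acth tens (runit X) (idm Y) }.
Arguments assoc m X Y Z : clear implicits.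
Arguments assoc_inv m X Y Z : clear implicits.
Arguments lunit m X : clear implicits.
Arguments runit m X : clear implicits.
Arguments unit_ob m : clear implicits.

Notation "X ⊗[ M ] Y" := (act (tens M) X Y) (at level 35).
Notation "f ⊗h[ M ] g" := (acth (tens M) f g) (at level 35).

Record BrMonCat := {
  bmc :> MonCat;
  braid : forall X Y : bmc, hom (X ⊗[bmc] Y) (Y ⊗[bmc] X);
  braid_iso : forall X Y, is_iso (braid X Y);
  braid_nat : forall X X' Y Y' (f : @hom bmc X X') (g : @hom bmc Y Y'),
      braid X' Y' ∘ (f ⊗h[bmc] g) = (g ⊗h[bmc] f) ∘ braid X Y;
  hexagon1 : forall X Y Z,
      (idm Y ⊗h[bmc] braid X Z) ∘ assoc bmc Y X Z ∘ (braid X Y ⊗h[bmc] idm Z)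
      = assoc bmc Y Z X ∘ braid X (Y ⊗[bmc] Z) ∘ assoc bmc X Y Z;
  hexagon2 : forall X Y Z,
      (braid X Z ⊗h[bmc] idm Y) ∘ assoc_inv bmc X Z Y ∘ (idm X ⊗h[bmc] braid Y Z)
      = assoc_inv bmc Z X Y ∘ braid (X ⊗[bmc] Y) Z ∘ assoc_inv bmc X Y Z }.
Arguments braid b X Y : clear implicits.

Record MonFunctor (D C : MonCat) := {
  mfun :> Functor D C;
  mfJ : forall X Y : D, hom (mfun X ⊗[C] mfun Y) (mfun (X ⊗[D] Y));
  mfJ_iso : forall X Y, is_iso (mfJ X Y);
  mfJ_nat : forall X X' Y Y' (f : @hom D X X') (g : @hom D Y Y'),
      fhom mfun (f ⊗h[D] g) ∘ mfJ X Y = mfJ X' Y' ∘ (fhom mfun f ⊗h[C] fhom mfun g);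
  mfJ0 : hom (unit_ob C) (mfun (unit_ob D));
  mfJ0_iso : is_iso mfJ0;
  mf_assoc : forall X Y Z,
      fhom mfun (assoc D X Y Z) ∘ mfJ (X ⊗[D] Y) Z ∘ (mfJ X Y ⊗h[C] idm (mfun Z))
      = mfJ X (Y ⊗[D] Z) ∘ (idm (mfun X) ⊗h[C] mfJ Y Z)
        ∘ assoc C (mfun X) (mfun Y) (mfun Z);
  mf_lunit : forall X,
      fhom mfun (lunit D X) ∘ mfJ (unit_ob D) X ∘ (mfJ0 ⊗h[C] idm (mfun X))
      = lunit C (mfun X);
  mf_runit : forall X,
      fhom mfun (runit D X) ∘ mfJ X (unit_ob D) ∘ (idm (mfun X) ⊗h[C] mfJ0)
      = runit C (mfun X) }.

Record BrMonFunctor (D C : BrMonCat) := {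
  bmf :> MonFunctor D C;
  bmf_braid : forall X Y : D,
      fhom bmf (braid D X Y) ∘ mfJ bmf X Y = mfJ bmf Y X ∘ braid C (bmf X) (bmf Y) }.

Record ModStruct (K : MonCat) (B : Cat) := {
  mact : Action K B;
  mass : forall (X Y : K) (P : B), hom (mact (X ⊗[K] Y) P) (mact X (mact Y P));
  mass_iso : forall X Y P, is_iso (mass X Y P);
  mass_nat : forall X X' Y Y' P P' (f : @hom K X X') (g : @hom K Y Y') (h : @hom B P P'),
      mass X' Y' P' ∘ acth mact (f ⊗h[K] g) h
      = acth mact f (acth mact g h) ∘ mass X Y P;
  munit : forall P : B, hom (mact (unit_ob K) P) P;
  munit_iso : forall P, is_iso (munit P);
  munit_nat : forall P P' (h : @hom B P P'),
      munit P' ∘ acth mact (idm (unit_ob K)) h = h ∘ munit P;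
  mpentagon : forall X Y Z P,
      mass X Y (mact Z P) ∘ mass (X ⊗[K] Y) Z P
      = acth mact (idm X) (mass Y Z P) ∘ mass X (Y ⊗[K] Z) P
        ∘ acth mact (assoc K X Y Z) (idm P);
  mtriangle : forall X P,
      acth mact (idm X) (munit P) ∘ mass X (unit_ob K) P
      = acth mact (runit K X) (idm P) }.

Record ModCat (K : MonCat) := {
  mcB :> Cat;
  mstr : ModStruct K mcB }.

Notation "X ⊙[ S ] P" := (act (mact S) X P) (at level 35).
Notation "f ⊙h[ S ] g" := (acth (mact S) f g) (at level 35).

Record ModFunctor (K : MonCat) (B B' : ModCat K) := {
  modf :> Functor B B';
  xi : forall (X : K) (P : B), hom (modf (X ⊙[mstr B] P)) (X ⊙[mstr B'] modf P);
  xi_iso : forall X P, is_iso (xi X P);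
  xi_nat : forall X X' P P' (f : @hom K X X') (g : @hom B P P'),
      xi X' P' ∘ fhom modf (f ⊙h[mstr B] g) = (f ⊙h[mstr B'] fhom modf g) ∘ xi X P;
  xi_assoc : forall X Y P,
      (idm X ⊙h[mstr B'] xi Y P) ∘ xi X (Y ⊙[mstr B] P) ∘ fhom modf (mass (mstr B) X Y P)
      = mass (mstr B') X Y (modf P) ∘ xi (X ⊗[K] Y) P;
  xi_unit : forall P,
      munit (mstr B') (modf P) ∘ xi (unit_ob K) P = fhom modf (munit (mstr B) P) }.

(* A monoidal category A which is a C-category, with a coherent natural iso
   chi : (X ⊙ M) ⊗ N ≅ X ⊙ (M ⊗ N) compatible with the C-action and with the
   monoidal structure of A (so that P |-> ω(P) ⊗ M is again a C-functor). *)
Record CMonoidal (C : MonCat) := {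
  cmA :> MonCat;
  cmmod : ModStruct C cmA;
  chi : forall (X : C) (M N : cmA),
      hom ((X ⊙[cmmod] M) ⊗[cmA] N) (X ⊙[cmmod] (M ⊗[cmA] N));
  chi_iso : forall X M N, is_iso (chi X M N);
  chi_nat : forall X X' M M' N N' (f : @hom C X X') (g : @hom cmA M M') (h : @hom cmA N N'),
      chi X' M' N' ∘ ((f ⊙h[cmmod] g) ⊗h[cmA] h)
      = (f ⊙h[cmmod] (g ⊗h[cmA] h)) ∘ chi X M N;
  chi_mass : forall X Y M N,
      mass cmmod X Y (M ⊗[cmA] N) ∘ chi (X ⊗[C] Y) M N
      = (idm X ⊙h[cmmod] chi Y M N) ∘ chi X (Y ⊙[cmmod] M) N
        ∘ (mass cmmod X Y M ⊗h[cmA] idm N);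
  chi_munit : forall M N,
      munit cmmod (M ⊗[cmA] N) ∘ chi (unit_ob C) M N = munit cmmod M ⊗h[cmA] idm N;
  chi_assoc : forall X M N L,
      (idm X ⊙h[cmmod] assoc cmA M N L) ∘ chi X (M ⊗[cmA] N) L
        ∘ (chi X M N ⊗h[cmA] idm L)
      = chi X M (N ⊗[cmA] L) ∘ assoc cmA (X ⊙[cmmod] M) N L;
  chi_runit : forall X M,
      (idm X ⊙h[cmmod] runit cmA M) ∘ chi X M (unit_ob cmA)
      = runit cmA (X ⊙[cmmod] M) }.

Arguments chi {C} c X M N.

Definition cm_modcat (C : MonCat) (A : CMonoidal C) : ModCat C :=
  {| mcB := A; mstr := cmmod A |}.

Section Coends.
Variables (C : MonCat) (A : CMonoidal C) (B : ModCat C)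
          (om : ModFunctor B (cm_modcat A)).

(* K-morphisms om -> om ⊗ M, where the acting category K acts on B and A
   through e : ob K -> ob C  (e = id for K = C;  e = F for K = D, which is
   exactly the D-category structure induced by F: X ⊗ P := F(X) ⊗ P, with
   the same ξ).  The C-functor om ⊗ M has structure iso
   chi_{X,om P,M} ∘ (ξ_{X,P} ⊗ 1_M). *)
Definition is_Kmor_tens (Kob : Type) (e : Kob -> ob C) (M : ob A)
    (phi : forall P : ob B, hom (om P) (om P ⊗[A] M)) : Prop :=
  (forall (P P' : ob B) (g : hom P P'),
      phi P' ∘ fhom om g = (fhom om g ⊗h[A] idm M) ∘ phi P) /\
  (forall (x : Kob) (P : ob B),
      chi A (e x) (om P) M ∘ (xi om (e x) P ⊗h[A] idm M) ∘ phi (e x ⊙[mstr B] P)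
      = (idm (e x) ⊙h[cmmod A] phi P) ∘ xi om (e x) P).

(* coend_K(om): an object representing M |-> Nat_K(om, om ⊗ M), via its
   universal K-morphism delta, together with its coalgebra structure
   (the comultiplication and counit determined by the stated equations). *)
Record Coend (Kob : Type) (e : Kob -> ob C) := {
  coH : ob A;
  codelta : forall P : ob B, hom (om P) (om P ⊗[A] coH);
  codelta_mor : is_Kmor_tens e codelta;
  co_univ : forall (M : ob A) (phi : forall P : ob B, hom (om P) (om P ⊗[A] M)),
      is_Kmor_tens e phi ->
      exists! f : hom coH M, forall P, (idm (om P) ⊗h[A] f) ∘ codelta P = phi P;
  coDelta : hom coH (coH ⊗[A] coH);
  coeps : hom coH (unit_ob A);
  co_coassoc : forall P,
      assoc A (om P) coH coH ∘ (codelta P ⊗h[A] idm coH) ∘ codelta P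
      = (idm (om P) ⊗h[A] coDelta) ∘ codelta P;
  co_counit : forall P,
      runit A (om P) ∘ (idm (om P) ⊗h[A] coeps) ∘ codelta P = idm (om P) }.

Definition is_coalg_mor (K1 K2 : Type) (e1 : K1 -> ob C) (e2 : K2 -> ob C)
    (H1 : Coend e1) (H2 : Coend e2) (f : hom (coH H1) (coH H2)) : Prop :=
  coDelta H2 ∘ f = (f ⊗h[A] f) ∘ coDelta H1 /\ coeps H2 ∘ f = coeps H1.

Definition liftable (Kob : Type) (e : Kob -> ob C) (H : Coend e)
    (P : ob A) (theta : hom P (P ⊗[A] coH H)) : Prop :=
  exists (Q : ob B) (u : hom (om Q) P),
    is_iso u /\ theta ∘ u = (u ⊗h[A] idm (coH H)) ∘ codelta H Q.

End Coends.

(* The universal C-morphism δ is in particular a D-morphism (the D-action is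
   induced through the object map of F, which is all of F that is needed), so it
   factors as δ = (1 ⊗ f) ∂ through the universal D-morphism ∂.  Two maps out of a
   coend that agree after (1 ⊗ -) δ are equal; applied to the defining equation
   of f this makes f a coalgebra morphism and an epimorphism.  If u : ω(Q) ≅
   coend_C(ω) is an isomorphism of comodules, then s = λ (ε u ⊗ 1) ∂_Q u⁻¹ is a
   section of f: indeed f s = λ (ε u ⊗ 1) δ_Q u⁻¹ = λ (ε ⊗ 1) Δ = 1. *)

Section ActionLemmas.
Context {K Bc : Cat} (T : Action K Bc).

Lemma acth_compr (X : K) (P P' P'' : Bc) (g : hom P' P'') (g' : hom P P') :
  acth T (idm X) (g ∘ g') = acth T (idm X) g ∘ acth T (idm X) g'.
Proof. rewrite <- acth_comp, comp_idl. reflexivity. Qed.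

Lemma acth_compl (X X' X'' : K) (P : Bc) (f : hom X' X'') (f' : hom X X') :
  acth T (f ∘ f') (idm P) = acth T f (idm P) ∘ acth T f' (idm P).
Proof. rewrite <- acth_comp, comp_idl. reflexivity. Qed.

Lemma acth_fst_snd {X X' : K} {P P' : Bc} (f : hom X X') (g : hom P P') :
  acth T f g = acth T f (idm P') ∘ acth T (idm X) g.
Proof. rewrite <- acth_comp, comp_idl, comp_idr. reflexivity. Qed.

Lemma acth_snd_fst {X X' : K} {P P' : Bc} (f : hom X X') (g : hom P P') :
  acth T f g = acth T (idm X') g ∘ acth T f (idm P).
Proof. rewrite <- acth_comp, comp_idl, comp_idr. reflexivity. Qed.

End ActionLemmas.

Lemma iso_section_unique {Cc : Cat} {a b : Cc} {r : hom a b} {x y : hom b a} :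
  is_iso r -> r ∘ x = idm b -> r ∘ y = idm b -> x = y.
Proof.
  intros [ri [E1 E2]] Hx Hy.
  rewrite <- (comp_idl x), <- (comp_idl y), <- E1, <- !comp_assoc, Hx, Hy.
  reflexivity.
Qed.

Lemma chi_natr (C : MonCat) (A : CMonoidal C) (X : C) (M N N' : A) (h : hom N N') :
  chi A X M N' ∘ (idm (X ⊙[cmmod A] M) ⊗h[A] h)
  = (idm X ⊙h[cmmod A] (idm M ⊗h[A] h)) ∘ chi A X M N.
Proof. rewrite <- chi_nat, acth_id. reflexivity. Qed.

Section Coends.
Context {C : MonCat} {A : CMonoidal C} {B : ModCat C}
        {om : ModFunctor B (cm_modcat A)}.

Lemma is_Kmor_tens_reindex {K K' : Type} {e : K -> ob C} (r : K' -> K) {M : ob A}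
    {phi : forall P : ob B, hom (om P) (om P ⊗[A] M)} :
  is_Kmor_tens (om:=om) e phi -> is_Kmor_tens (om:=om) (fun x => e (r x)) phi.
Proof. intros [Hnat Hxi]; split; [exact Hnat | intros x; exact (Hxi (r x))]. Qed.

Lemma is_Kmor_tens_postcomp {K : Type} {e : K -> ob C} {M M' : ob A}
    {phi : forall P : ob B, hom (om P) (om P ⊗[A] M)} (g : hom M M') :
  is_Kmor_tens (om:=om) e phi ->
  is_Kmor_tens (om:=om) e (fun P => (idm (om P) ⊗h[A] g) ∘ phi P).
Proof.
  intros [Hnat Hxi]; split.
  - intros P P' h. rewrite <- comp_assoc, Hnat, !comp_assoc.
    rewrite <- !acth_comp, !comp_idl, !comp_idr. reflexivity.
  - intros x P. simpl.
    rewrite comp_assoc, <- (comp_assoc (chi A (e x) (om P) M')).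
    rewrite <- acth_fst_snd, acth_snd_fst.
    rewrite (comp_assoc (chi A (e x) (om P) M')), chi_natr.
    rewrite <- !comp_assoc, (comp_assoc (chi A (e x) (om P) M)), Hxi.
    rewrite !comp_assoc, <- acth_compr. reflexivity.
Qed.

Lemma coend_hom_ext (K : Type) (e : K -> ob C) (H : Coend om e) (M : ob A)
    (g h : hom (coH H) M) :
  (forall P, (idm (om P) ⊗h[A] g) ∘ codelta H P = (idm (om P) ⊗h[A] h) ∘ codelta H P) ->
  g = h.
Proof.
  intros Hgh.
  destruct (co_univ H (is_Kmor_tens_postcomp g (codelta_mor H))) as [u [_ Hu]].
  transitivity u; [symmetry|]; apply Hu; intros P; [reflexivity | symmetry; apply Hgh].
Qed.

Lemma coend_counitl (K : Type) (e : K -> ob C) (H : Coend om e) :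
  lunit A (coH H) ∘ (coeps H ⊗h[A] idm (coH H)) ∘ coDelta H = idm (coH H).
Proof.
  apply coend_hom_ext. intros P.
  rewrite acth_id, comp_idl, !acth_compr.
  rewrite <- !comp_assoc, <- co_coassoc, !comp_assoc.
  rewrite <- (comp_assoc (idm (om P) ⊗h[A] lunit A (coH H))), <- assoc_nat.
  rewrite (comp_assoc (idm (om P) ⊗h[A] lunit A (coH H))), triangle.
  rewrite <- !acth_compl, co_counit, acth_id, comp_idl.
  reflexivity.
Qed.

Section CoendMap.
Context {K1 K2 : Type} {e1 : K1 -> ob C} {e2 : K2 -> ob C}
        {H1 : Coend om e1} {H2 : Coend om e2} {f : hom (coH H1) (coH H2)}.
Hypothesis f_codelta : forall P, (idm (om P) ⊗h[A] f) ∘ codelta H1 P = codelta H2 P.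

Lemma coend_map_comul : coDelta H2 ∘ f = (f ⊗h[A] f) ∘ coDelta H1.
Proof.
  apply coend_hom_ext. intros P.
  rewrite !acth_compr, <- !comp_assoc, f_codelta, <- co_coassoc, <- co_coassoc.
  rewrite !comp_assoc, <- assoc_nat, <- (comp_assoc _ ((idm (om P) ⊗h[A] f) ⊗h[A] f)).
  rewrite <- acth_comp, f_codelta, comp_idr, (acth_fst_snd _ (codelta H2 P) f).
  rewrite <- !comp_assoc, f_codelta. reflexivity.
Qed.

Lemma coend_map_counit : coeps H2 ∘ f = coeps H1.
Proof.
  apply coend_hom_ext. intros P.
  rewrite acth_compr, <- comp_assoc, f_codelta.
  apply (iso_section_unique (runit_iso (om P))); rewrite comp_assoc; apply co_counit.
Qed.

Lemma coend_map_coalg_mor : is_coalg_mor f.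
Proof. split; [exact coend_map_comul | exact coend_map_counit]. Qed.

Lemma coend_map_epi : is_epi f.
Proof.
  intros c g h Hgh. apply coend_hom_ext. intros P.
  rewrite <- !f_codelta, !comp_assoc, <- !acth_compr, Hgh. reflexivity.
Qed.

Lemma coend_map_retraction : liftable (H:=H2) (coDelta H2) -> is_retraction f.
Proof.
  intros [Q [u [[ui [_ Hu]] Hlift]]].
  exists (lunit A (coH H1) ∘ ((coeps H2 ∘ u) ⊗h[A] idm (coH H1)) ∘ codelta H1 Q ∘ ui).
  rewrite !comp_assoc, <- lunit_nat, <- (comp_assoc (lunit A (coH H2))).
  rewrite <- acth_comp, comp_idl, comp_idr, (acth_fst_snd _ (coeps H2 ∘ u) f).
  rewrite !comp_assoc, <- (comp_assoc _ (idm (om Q) ⊗h[A] f)), f_codelta, acth_compl.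
  rewrite !comp_assoc, <- (comp_assoc _ (u ⊗h[A] idm (coH H2))), <- Hlift.
  change (@comp (mcat A) _ _ _ u ui = idm _) in Hu.
  rewrite <- !comp_assoc, Hu, comp_idr, !comp_assoc.
  apply coend_counitl.
Qed.

End CoendMap.
End Coends.

Theorem theorem5p2
  (C D : BrMonCat) (F : BrMonFunctor D C)
  (A : CMonoidal C) (B : ModCat C) (om : ModFunctor B (cm_modcat A))
  (coC : Coend om (fun X : ob C => X))
  (coD : Coend om (fun X : ob D => fob F X)) :
  exists f : hom (coH coD) (coH coC),
    (forall P : ob B, (idm (om P) ⊗h[A] f) ∘ codelta coD P = codelta coC P) /\
    is_coalg_mor f /\ is_epi f /\
    (liftable (H:=coC) (coDelta coC) -> is_retraction f).
Proof.
  pose proof (is_Kmor_tens_reindex (fob F) (codelta_mor coC)) as delta_Dmor.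
  destruct (co_univ coD delta_Dmor) as [f [f_codelta _]].
  exists f. split; [exact f_codelta |].
  split; [exact (coend_map_coalg_mor f_codelta) |].
  split; [exact (coend_map_epi f_codelta) | exact (coend_map_retraction f_codelta)].
Qed.
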